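(* Let $P,Q,R\in D$ be non-collinear and let $m\in\mathbb{Z}_{\ge0}$ be the number of triangles inscribed in $S^1$ and circumscribing $\triangle PQR$. Then $$m=\begin{cases}0 & \text{if } \omega(P,Q,R)<1,\\ 1 & \text{if } \omega(P,Q,R)=1,\\ 2 & \text{if } \omega(P,Q,R)>1.\end{cases}$$
   Context: $D=\{(x,y)\in\mathbb{R}^2: x^2+y^2<1\}$ (Beltrami–Klein disk), $S^1$ its boundary circle. Let $D_P$ be the unit disk with Poincaré distance $d(P,Q)=\operatorname{arccosh}\left(1+\frac{2|P-Q|^2}{(1-|P|^2)(1-|Q|^2)}\right)$, and $G^{-1}:D\to D_P$, $G^{-1}(x,y)=\left(\frac{x}{1+\sqrt{1-x^2-y^2}},\frac{y}{1+\sqrt{1-x^2-y^2}}\right)$. For $P,Q\in D$, $d'(P,Q):=d(G^{-1}(P),G^{-1}(Q))$. For $P\ne Q$, $\Delta'(P,Q):=\log\frac{e^{d'(P,Q)}+1}{e^{d'(P,Q)}-1}$. $\delta(P,Q,R)$ is the minimum of $d'(R,S)$ over points $S\in D$ on the straight line through $P$ and $Q$. Define $$\omega(P,Q,R):=\frac{\delta(P,Q,R)+\delta(R,P,Q)+\delta(Q,R,P)}{\Delta'(P,Q)+\Delta'(R,P)+\Delta'(Q,R)}.$$ A triangle inscribed in $S^1$ and circumscribing $\triangle PQR$ is a Euclidean triangle with three distinct vertices on $S^1$ such that $P$, $Q$, $R$ lie on three distinct sides of it (one point on each side). *)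

From Stdlib Require Import Reals Lra List ClassicalEpsilon.
Open Scope R_scope.

Definition pt := (R * R)%type.

Definition InD (P : pt) : Prop := fst P ^ 2 + snd P ^ 2 < 1.
Definition OnS1 (P : pt) : Prop := fst P ^ 2 + snd P ^ 2 = 1.

Definition sqdist (P Q : pt) : R := (fst P - fst Q) ^ 2 + (snd P - snd Q) ^ 2.
Definition sqnorm (P : pt) : R := fst P ^ 2 + snd P ^ 2.

Definition arccosh (x : R) : R := ln (x + sqrt (x ^ 2 - 1)).

Definition dP (P Q : pt) : R :=
  arccosh (1 + 2 * sqdist P Q / ((1 - sqnorm P) * (1 - sqnorm Q))).

(* G^{-1} : Klein disk -> Poincare disk *)
Definition Ginv (P : pt) : pt :=
  let s := 1 + sqrt (1 - fst P ^ 2 - snd P ^ 2) in (fst P / s, snd P / s).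

Definition d' (P Q : pt) : R := dP (Ginv P) (Ginv Q).

Definition Delta' (P Q : pt) : R :=
  ln ((exp (d' P Q) + 1) / (exp (d' P Q) - 1)).

Definition on_line (P Q S : pt) : Prop :=
  exists t : R, S = (fst P + t * (fst Q - fst P), snd P + t * (snd Q - snd P)).

Definition is_delta (P Q Rp : pt) (m : R) : Prop :=
  (exists S, InD S /\ on_line P Q S /\ d' Rp S = m) /\
  (forall S, InD S -> on_line P Q S -> m <= d' Rp S).

Definition delta (P Q Rp : pt) : R :=
  epsilon (inhabits 0) (is_delta P Q Rp).

Definition omega (P Q Rp : pt) : R :=
  (delta P Q Rp + delta Rp P Q + delta Q Rp P) /
  (Delta' P Q + Delta' Rp P + Delta' Q Rp).

Definition collinear (P Q Rp : pt) : Prop :=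
  (fst Q - fst P) * (snd Rp - snd P) - (snd Q - snd P) * (fst Rp - fst P) = 0.

Definition on_segment (X A B : pt) : Prop :=
  exists t : R, 0 <= t <= 1 /\
    X = (fst A + t * (fst B - fst A), snd A + t * (snd B - snd A)).

(* A triangle is represented by its set of three vertices. *)
Definition circumscribing_inscribed (P Q Rp : pt) (T : pt -> Prop) : Prop :=
  exists A B C : pt,
    OnS1 A /\ OnS1 B /\ OnS1 C /\ A <> B /\ B <> C /\ C <> A /\
    T = (fun X => X = A \/ X = B \/ X = C) /\
    on_segment P B C /\ on_segment Q C A /\ on_segment Rp A B.

Definition has_card {T : Type} (S : T -> Prop) (n : nat) : Prop :=
  exists l : list T, length l = n /\ NoDup l /\ (forall x, In x l <-> S x).

(* In complex notation the chord of the unit circle from a through x ends at (x - a) / (1 - x̄ a).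
   A circumscribing triangle is determined by its vertex A: go from A through R, then through P,
   then through Q; the triangle closes up exactly when A satisfies one linear equation
   <m, A> = y.  This line meets the unit circle in 0, 1 or 2 points according to the sign of
   |m|^2 - y^2 = D^2 - (1 - |P|^2)(1 - |Q|^2)(1 - |R|^2), where D is twice the signed area of PQR.
   On the hyperbolic side, with g = (1 - <P,Q>)^2 - (1 - |P|^2)(1 - |Q|^2), the Klein model gives
   sinh^2 delta(P,Q,R) = D^2 / ((1 - |R|^2) g) and sinh^2 Delta'(P,Q) = (1 - |P|^2)(1 - |Q|^2) / g,
   so delta(P,Q,R) - Delta'(P,Q) and its two cyclic variants all have the sign of that same
   quantity, and hence so does omega - 1. *)

From Stdlib Require Import Reals Lra Nsatz Psatz List ClassicalEpsilon.
From Coquelicot Require Import Complex.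
Open Scope R_scope.

Definition dot (X Y : pt) : R := fst X * fst Y + snd X * snd Y.

Definition affine (X Y : pt) (t : R) : pt :=
  (fst X + t * (fst Y - fst X), snd X + t * (snd Y - snd X)).

Definition area2 (X Y Z : pt) : R :=
  (fst Y - fst X) * (snd Z - snd X) - (snd Y - snd X) * (fst Z - fst X).

Lemma one_sub_sqnorm_pos X : InD X -> 0 < 1 - sqnorm X.
Proof. unfold InD, sqnorm; lra. Qed.

Lemma one_sub_dot_pos X Y : InD X -> sqnorm Y <= 1 -> 0 < 1 - dot X Y.
Proof.
  destruct X as [x1 x2], Y as [y1 y2]; unfold InD, sqnorm, dot; simpl; intros.
  pose proof (pow2_ge_0 (x1 - y1)); pose proof (pow2_ge_0 (x2 - y2)); nra.
Qed.

Lemma sum_sq_pos u v : u <> 0 \/ v <> 0 -> 0 < u ^ 2 + v ^ 2.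
Proof.
  rewrite <- !Rsqr_pow2. pose proof (Rle_0_sqr u); pose proof (Rle_0_sqr v).
  intros [Hu|Hv]; [apply Rsqr_pos_lt in Hu | apply Rsqr_pos_lt in Hv]; lra.
Qed.

Lemma sqdist_pos X Y : X <> Y -> 0 < sqdist X Y.
Proof.
  destruct X as [x1 x2], Y as [y1 y2]; unfold sqdist; simpl; intros Hne.
  apply sum_sq_pos.
  destruct (Req_dec x1 y1) as [->|H1]; [destruct (Req_dec x2 y2) as [->|H2]|].
  - contradiction.
  - right; lra.
  - left; lra.
Qed.

Lemma sqnorm_affine_S1 U V t : OnS1 U -> OnS1 V ->
  sqnorm (affine U V t) = 1 + t * (t - 1) * sqdist U V.
Proof.
  destruct U as [u1 u2], V as [v1 v2]; unfold OnS1, sqnorm, affine, sqdist; simpl.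
  intros; nsatz.
Qed.

Lemma affine_of_area2 U V X : U <> V -> area2 U V X = 0 -> exists t, X = affine U V t.
Proof.
  intros Hne Ha. pose proof (sqdist_pos _ _ Hne) as Hd.
  destruct U as [u1 u2], V as [v1 v2], X as [x1 x2].
  set (d := sqdist (u1, u2) (v1, v2)) in *.
  set (p := (x1 - u1) * (v1 - u1) + (x2 - u2) * (v2 - u2)).
  assert (K1 : (x1 - u1) * d = p * (v1 - u1) - (v2 - u2) * area2 (u1, u2) (v1, v2) (x1, x2))
    by (unfold d, p, sqdist, area2; simpl; ring).
  assert (K2 : (x2 - u2) * d = p * (v2 - u2) + (v1 - u1) * area2 (u1, u2) (v1, v2) (x1, x2))
    by (unfold d, p, sqdist, area2; simpl; ring).
  rewrite Ha, Rmult_0_r in K1, K2.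
  exists (p / d). unfold affine; simpl. f_equal.
  - replace (p / d * (v1 - u1)) with ((x1 - u1) * d / d) by (rewrite K1; field; lra). field; lra.
  - replace (p / d * (v2 - u2)) with ((x2 - u2) * d / d) by (rewrite K2; field; lra). field; lra.
Qed.

(* [chord A B X] is b (1 - x̄ a) = x - a in complex notation; for a, b on the unit circle this is
   the equation a + b - a b x̄ = x of the line ab. *)
Definition chord_den (X A : C) : C := (1 - Cconj X * A)%C.
Definition chord (A B X : C) : Prop := (B * chord_den X A = X - A)%C.
Definition chord_end (X A : C) : C := ((X - A) / chord_den X A)%C.

Lemma chord_den_neq0 X A : InD X -> OnS1 A -> chord_den X A <> 0%C.
Proof.
  intros HX HA E.
  assert (Hd : 0 < 1 - dot X A)
    by (apply one_sub_dot_pos; [assumption | unfold OnS1, sqnorm in *; lra]).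
  apply (f_equal fst) in E.
  destruct X as [x1 x2], A as [a1 a2]; unfold chord_den, dot in *; simpl in *. lra.
Qed.

Lemma chord_chord_end X A : InD X -> OnS1 A -> chord A (chord_end X A) X.
Proof.
  intros HX HA. pose proof (chord_den_neq0 X A HX HA).
  unfold chord, chord_end. field. assumption.
Qed.

Lemma chord_end_unique (X A B : C) : InD X -> OnS1 A -> chord A B X -> B = chord_end X A.
Proof.
  intros HX HA H. pose proof (chord_den_neq0 X A HX HA).
  unfold chord, chord_end in *. rewrite <- H. field. assumption.
Qed.

Lemma chord_sym A B X : chord A B X -> chord B A X.
Proof.
  destruct A as [a1 a2], B as [b1 b2], X as [x1 x2].
  unfold chord, chord_den, Cconj, Cmult, Cminus, Cplus, Copp, RtoC; simpl.
  intros H; injection H as H1 H2. f_equal; nsatz.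
Qed.

Lemma OnS1_Cmod (Z : C) : OnS1 Z <-> Cmod Z = 1.
Proof.
  unfold OnS1, Cmod. split; intros H.
  - rewrite H. apply sqrt_1.
  - rewrite <- (sqrt_sqrt (fst Z ^ 2 + snd Z ^ 2)), H by nra. ring.
Qed.

Lemma chord_end_S1 X A : InD X -> OnS1 A -> OnS1 (chord_end X A).
Proof.
  intros HX HA. pose proof (chord_den_neq0 X A HX HA) as Hd.
  assert (E : Cmod (X - A) = Cmod (chord_den X A)).
  { destruct X as [x1 x2], A as [a1 a2]; unfold OnS1 in HA.
    unfold Cmod, chord_den; f_equal; simpl in *; nsatz. }
  apply OnS1_Cmod. unfold chord_end.
  rewrite Cmod_div, E by assumption. field. apply Rgt_not_eq, Cmod_gt_0, Hd.
Qed.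

Lemma chord_end_involutive X A : InD X -> OnS1 A -> chord_end X (chord_end X A) = A.
Proof.
  intros HX HA. symmetry. apply chord_end_unique; [assumption | apply chord_end_S1; assumption |].
  apply chord_sym, chord_chord_end; assumption.
Qed.

Lemma chord_of_segment A B X : OnS1 A -> OnS1 B -> on_segment X A B -> chord A B X.
Proof.
  intros HA HB [t [_ ->]].
  destruct A as [a1 a2], B as [b1 b2]; unfold OnS1 in *.
  unfold chord, chord_den, Cconj, Cmult, Cminus, Cplus, Copp, RtoC; simpl in *.
  f_equal; nsatz.
Qed.

Lemma segment_of_chord A B X : OnS1 A -> OnS1 B -> InD X -> chord A B X ->
  A <> B /\ on_segment X A B.
Proof.
  intros HA HB HX H.
  assert (Hdot : 0 < 1 - dot X A).
  { apply one_sub_dot_pos; [assumption | unfold OnS1, sqnorm in *; lra]. }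
  assert (Hne : A <> B).
  { intros <-. apply Rlt_not_eq in Hdot. apply Hdot.
    destruct A as [a1 a2], X as [x1 x2]; unfold OnS1, dot in *.
    unfold chord, chord_den, Cconj, Cmult, Cminus, Cplus, Copp, RtoC in H; simpl in *.
    injection H as H1 H2. clear -H1 H2 HA. nsatz. }
  split; [assumption |].
  assert (Harea : area2 A B X = 0).
  { destruct A as [a1 a2], B as [b1 b2], X as [x1 x2]; unfold OnS1, area2 in *.
    unfold chord, chord_den, Cconj, Cmult, Cminus, Cplus, Copp, RtoC in H; simpl in *.
    injection H as H1 H2. clear -H1 H2 HA HB. nsatz. }
  destruct (affine_of_area2 A B X Hne Harea) as [t ->].
  pose proof (sqnorm_affine_S1 A B t HA HB) as En.
  pose proof (sqdist_pos A B Hne) as Hd.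
  assert (t * (t - 1) < 0) by (unfold InD, sqnorm in *; nra).
  exists t. split; [nra | reflexivity].
Qed.

Definition closing_normal (P Q Rp : C) : C := (Rp + Q - P - Q * Cconj P * Rp)%C.
Definition closing_level (P Q Rp : pt) : R := 1 - dot Q P + dot Q Rp - dot P Rp.

(* After clearing the denominators of b and c, the defect of the third chord relation is
   (up to the unit factor ā) twice the defect of the linear closing equation. *)
Lemma closing_identity P Q Rp A B C : OnS1 A -> chord A B Rp -> chord B C P ->
  (Cconj A * (chord_den Rp A * chord_den P B) * (A * chord_den Q C - (Q - C)))%C
  = RtoC (2 * (closing_level P Q Rp - dot (closing_normal P Q Rp) A)).
Proof.
  destruct P as [p1 p2], Q as [q1 q2], Rp as [r1 r2], A as [a1 a2], B as [b1 b2], C as [c1 c2].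
  unfold OnS1, chord, chord_den, closing_normal, closing_level, dot,
    Cconj, Cmult, Cminus, Cplus, Copp, RtoC; simpl.
  intros HA E1 E2. injection E1 as E1 E1'. injection E2 as E2 E2'.
  f_equal; nsatz.
Qed.

Lemma closing_of_chords P Q Rp A B C : OnS1 A ->
  chord A B Rp -> chord B C P -> chord C A Q ->
  dot (closing_normal P Q Rp) A = closing_level P Q Rp.
Proof.
  intros HA H1 H2 H3. pose proof (closing_identity P Q Rp A B C HA H1 H2) as E.
  unfold chord in H3. rewrite H3 in E.
  apply (f_equal fst) in E. simpl in E. lra.
Qed.

Lemma chord_of_closing P Q Rp A B C : InD P -> InD Rp -> OnS1 A -> OnS1 B ->
  chord A B Rp -> chord B C P ->
  dot (closing_normal P Q Rp) A = closing_level P Q Rp -> chord C A Q.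
Proof.
  intros HP HR HA HB H1 H2 Hl.
  pose proof (closing_identity P Q Rp A B C HA H1 H2) as E.
  rewrite Hl, Rminus_diag, Rmult_0_r in E.
  assert (HA0 : Cconj A <> 0%C).
  { intros E0. apply (f_equal Cmod) in E0. rewrite Cmod_conj, Cmod_0 in E0.
    apply OnS1_Cmod in HA. lra. }
  assert (Hres : (A * chord_den Q C - (Q - C))%C = 0%C).
  { destruct (Ceq_dec (A * chord_den Q C - (Q - C))%C 0%C) as [Z|NZ]; [assumption |].
    exfalso. revert E. apply Cmult_neq_0; [apply Cmult_neq_0; [assumption |] | assumption].
    apply Cmult_neq_0; apply chord_den_neq0; assumption. }
  unfold chord. replace (A * chord_den Q C)%C with ((A * chord_den Q C - (Q - C)) + (Q - C))%C
    by ring.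
  rewrite Hres. ring.
Qed.

Definition chord_triangle (P Rp A : pt) : pt -> Prop :=
  fun X => X = A \/ X = chord_end Rp A \/ X = chord_end P (chord_end Rp A).

Section ClosingTriangle.

Variables P Q Rp A : pt.
Hypotheses (HP : InD P) (HQ : InD Q) (HR : InD Rp) (HA : OnS1 A)
  (Hclose : dot (closing_normal P Q Rp) A = closing_level P Q Rp).

Let B := chord_end Rp A.
Let C := chord_end P B.

Lemma chord_triangle_spec :
  OnS1 B /\ OnS1 C /\ A <> B /\ B <> C /\ C <> A /\
  on_segment P B C /\ on_segment Q C A /\ on_segment Rp A B.
Proof.
  assert (HB : OnS1 B) by (apply chord_end_S1; assumption).
  assert (HC : OnS1 C) by (apply chord_end_S1; assumption).
  assert (K1 : chord A B Rp) by (apply chord_chord_end; assumption).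
  assert (K2 : chord B C P) by (apply chord_chord_end; assumption).
  pose proof (chord_of_closing P Q Rp A B C HP HR HA HB K1 K2 Hclose) as K3.
  destruct (segment_of_chord A B Rp HA HB HR K1) as [N1 S1].
  destruct (segment_of_chord B C P HB HC HP K2) as [N2 S2].
  destruct (segment_of_chord C A Q HC HA HQ K3) as [N3 S3].
  tauto.
Qed.

Lemma circumscribing_chord_triangle : circumscribing_inscribed P Q Rp (chord_triangle P Rp A).
Proof.
  destruct chord_triangle_spec as (HB & HC & N1 & N2 & N3 & S1 & S2 & S3).
  exists A, B, C. repeat split; assumption.
Qed.

End ClosingTriangle.

Lemma circumscribing_inv P Q Rp T : InD P -> InD Rp -> circumscribing_inscribed P Q Rp T ->
  exists A, (OnS1 A /\ dot (closing_normal P Q Rp) A = closing_level P Q Rp) /\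
    T = chord_triangle P Rp A.
Proof.
  intros HP HR (A & B & C & HA & HB & HC & _ & _ & _ & -> & S1 & S2 & S3).
  pose proof (chord_of_segment _ _ _ HA HB S3) as K1.
  pose proof (chord_of_segment _ _ _ HB HC S1) as K2.
  pose proof (chord_of_segment _ _ _ HC HA S2) as K3.
  exists A. split; [split; [assumption | apply (closing_of_chords P Q Rp A B C); assumption] |].
  unfold chord_triangle.
  rewrite <- (chord_end_unique _ _ _ HR HA K1), <- (chord_end_unique _ _ _ HP HB K2).
  reflexivity.
Qed.

(* Two vertices of [chord_triangle P Rp A] determine the others through the involutions
   [chord_end Rp] and [chord_end P], so equal triangles have the same first vertex. *)
Lemma chord_triangle_inj P Q Rp A1 A2 : InD P -> InD Q -> InD Rp -> OnS1 A1 -> OnS1 A2 ->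
  dot (closing_normal P Q Rp) A1 = closing_level P Q Rp ->
  dot (closing_normal P Q Rp) A2 = closing_level P Q Rp ->
  chord_triangle P Rp A1 = chord_triangle P Rp A2 -> A1 = A2.
Proof.
  intros HP HQ HR HA1 HA2 Hl1 Hl2 E.
  destruct (chord_triangle_spec P Q Rp A1 HP HQ HR HA1 Hl1) as (HB1 & _ & N1 & N2 & N3 & _).
  destruct (chord_triangle_spec P Q Rp A2 HP HQ HR HA2 Hl2) as (HB2 & _ & M1 & M2 & M3 & _).
  set (B1 := chord_end Rp A1) in *. set (C1 := chord_end P B1) in *.
  set (B2 := chord_end Rp A2) in *. set (C2 := chord_end P B2) in *.
  assert (mem : forall U, chord_triangle P Rp A2 U -> U = A1 \/ U = B1 \/ U = C1)
    by (rewrite <- E; tauto).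
  assert (IR : forall U, OnS1 U -> chord_end Rp (chord_end Rp U) = U)
    by (intros; apply chord_end_involutive; assumption).
  assert (IP : forall U, OnS1 U -> chord_end P (chord_end P U) = U)
    by (intros; apply chord_end_involutive; assumption).
  assert (MA : A2 = A1 \/ A2 = B1 \/ A2 = C1) by (apply mem; left; reflexivity).
  assert (MB : B2 = A1 \/ B2 = B1 \/ B2 = C1) by (apply mem; right; left; reflexivity).
  assert (MC : C2 = A1 \/ C2 = B1 \/ C2 = C1) by (apply mem; right; right; reflexivity).
  destruct MA as [EA | [EA | EA]]; [symmetry; assumption | exfalso | exfalso].
  - assert (EB : B2 = A1) by (unfold B2; rewrite EA; apply IR; assumption).
    destruct MC as [EC | [EC | EC]]; [congruence | congruence |].
    assert (B2 = B1) by (rewrite <- (IP B2 HB2), <- (IP B1 HB1); f_equal; exact EC).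
    congruence.
  - assert (HC1 : OnS1 C1) by (rewrite <- EA; assumption).
    assert (EB' : B2 = chord_end Rp C1) by (unfold B2; rewrite EA; reflexivity).
    destruct MB as [EB | [EB | EB]]; [| | congruence].
    + apply N2. rewrite <- (IR C1 HC1), <- EB', EB. reflexivity.
    + apply N3. rewrite <- (IR C1 HC1), <- EB', EB. apply IR; assumption.
Qed.

Definition num_sq_roots (k : R) : nat :=
  if Rlt_dec k 0 then 0 else if Req_EM_T k 0 then 1 else 2.

Lemma has_card_ext {T : Type} (S S' : T -> Prop) n :
  (forall x, S x <-> S' x) -> has_card S n -> has_card S' n.
Proof.
  intros E (l & Hl & Hnd & Hin). exists l. split; [assumption | split; [assumption |]].
  intros x. rewrite Hin. apply E.
Qed.

Lemma has_card_image {T U : Type} (S : T -> Prop) (f : T -> U) n :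
  (forall x y, S x -> S y -> f x = f y -> x = y) -> has_card S n ->
  has_card (fun u => exists x, S x /\ u = f x) n.
Proof.
  intros Hinj (l & Hl & Hnd & Hin). exists (map f l).
  split; [rewrite length_map; assumption |]. split.
  - apply NoDup_map_NoDup_ForallPairs; [| assumption].
    intros x y Hx Hy. apply Hinj; apply Hin; assumption.
  - intros u. rewrite in_map_iff. split.
    + intros (x & <- & Hx). exists x. split; [apply Hin; assumption | reflexivity].
    + intros (x & Hx & ->). exists x. split; [reflexivity | apply Hin; assumption].
Qed.

Lemma has_card_sq_roots k : has_card (fun c => c ^ 2 = k) (num_sq_roots k).
Proof.
  unfold num_sq_roots. destruct (Rlt_dec k 0) as [Hlt | Hge].
  - exists nil. split; [reflexivity | split; [constructor |]].
    intros c. split; [intros [] | intros E]. pose proof (pow2_ge_0 c). lra.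
  - destruct (Req_EM_T k 0) as [-> | Hne].
    + exists (0 :: nil). split; [reflexivity | split; [repeat constructor; intros [] |]].
      intros c. split; [intros [<- | []]; ring | intros E]. left. nra.
    + set (s := sqrt k). assert (Hs : 0 < s) by (apply sqrt_lt_R0; lra).
      assert (Es : s ^ 2 = k) by (apply pow2_sqrt; lra).
      exists (s :: - s :: nil). split; [reflexivity | split].
      * repeat constructor; [intros [E | []]; lra | intros []].
      * intros c. split; [intros [<- | [<- | []]]; [exact Es | rewrite <- Es; ring] | intros E].
        assert (F : (c - s) * (c + s) = 0) by (rewrite <- Es in E; nra).
        apply Rmult_integral in F. destruct F; [left | right; left]; lra.
Qed.

Definition circle_line_point (m : pt) (y c : R) : pt :=
  ((y * fst m - c * snd m) / sqnorm m, (y * snd m + c * fst m) / sqnorm m).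

(* The witness c is the cross product of m and A. *)
Lemma circle_line_iff m y A : 0 < sqnorm m ->
  (OnS1 A /\ dot m A = y) <->
  (exists c, c ^ 2 = sqnorm m - y ^ 2 /\ A = circle_line_point m y c).
Proof.
  intros Hm. destruct m as [m1 m2], A as [a1 a2].
  unfold circle_line_point, OnS1, dot, sqnorm in *; simpl in *. split.
  - intros [HA <-]. exists (m1 * a2 - m2 * a1). split; [nsatz |].
    f_equal; field; lra.
  - intros (c & Hc & E). injection E as -> ->. split; [| field; lra].
    field_simplify_eq; [| lra].
    replace (c ^ 2) with (m1 ^ 2 + m2 ^ 2 - y ^ 2) by (simpl; lra). ring.
Qed.

Lemma circle_line_point_inj m y c c' : 0 < sqnorm m ->
  circle_line_point m y c = circle_line_point m y c' -> c = c'.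
Proof.
  intros Hm E. destruct m as [m1 m2]; unfold circle_line_point, sqnorm in *; simpl in *.
  injection E as E1 E2. unfold Rdiv in E1, E2.
  assert (Hn : / (m1 ^ 2 + m2 ^ 2) <> 0) by (apply Rinv_neq_0_compat; lra).
  apply Rmult_eq_reg_r in E1, E2; try assumption.
  assert (G1 : c * m1 = c' * m1) by lra.
  assert (G2 : c * m2 = c' * m2) by lra.
  assert (F : (c - c') * (m1 ^ 2 + m2 ^ 2) = 0).
  { replace ((c - c') * (m1 ^ 2 + m2 ^ 2))
      with (m1 * (c * m1 - c' * m1) + m2 * (c * m2 - c' * m2)) by ring.
    rewrite G1, G2. ring. }
  apply Rmult_integral in F. lra.
Qed.

Lemma has_card_circle_line m y : m <> (0, 0) \/ y <> 0 ->
  has_card (fun A => OnS1 A /\ dot m A = y) (num_sq_roots (sqnorm m - y ^ 2)).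
Proof.
  intros Hdeg. destruct (Req_dec (sqnorm m) 0) as [Hm0 | Hm].
  - assert (Hm : m = (0, 0)).
    { destruct m as [m1 m2]; unfold sqnorm in Hm0; simpl in Hm0. f_equal; nra. }
    subst m. destruct Hdeg as [Hdeg | Hy]; [contradiction |].
    assert (Hy2 : 0 < y ^ 2) by (rewrite <- Rsqr_pow2; apply Rsqr_pos_lt; assumption).
    unfold num_sq_roots. destruct (Rlt_dec (sqnorm (0, 0) - y ^ 2) 0) as [_ | Hge].
    + exists nil. split; [reflexivity | split; [constructor |]].
      intros A. split; [intros [] | intros [_ E]]. unfold dot in E; simpl in E. lra.
    + exfalso. apply Hge. unfold sqnorm; simpl. lra.
  - assert (Hpos : 0 < sqnorm m).
    { destruct m as [m1 m2]; unfold sqnorm in *; simpl in *.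
      pose proof (pow2_ge_0 m1); pose proof (pow2_ge_0 m2). lra. }
    apply (has_card_ext
      (fun A => exists c, c ^ 2 = sqnorm m - y ^ 2 /\ A = circle_line_point m y c)).
    { intros A. symmetry. apply circle_line_iff; assumption. }
    apply has_card_image; [| apply has_card_sq_roots].
    intros c c' _ _. apply circle_line_point_inj; assumption.
Qed.

Definition disc (P Q Rp : pt) : R :=
  area2 P Q Rp ^ 2 - (1 - sqnorm P) * (1 - sqnorm Q) * (1 - sqnorm Rp).

Lemma closing_disc P Q Rp :
  sqnorm (closing_normal P Q Rp) - closing_level P Q Rp ^ 2 = disc P Q Rp.
Proof.
  destruct P as [p1 p2], Q as [q1 q2], Rp as [r1 r2].
  unfold disc, area2, closing_normal, closing_level, sqnorm, dot,
    Cconj, Cmult, Cminus, Cplus, Copp; simpl. ring.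
Qed.

Lemma closing_line_nondegenerate P Q Rp : InD P -> InD Q -> InD Rp ->
  closing_normal P Q Rp <> (0, 0) \/ closing_level P Q Rp <> 0.
Proof.
  intros HP HQ HR.
  assert (E : closing_level P Q Rp - dot (closing_normal P Q Rp) Rp
              = (1 - sqnorm Rp) * (1 - dot Q P)).
  { destruct P as [p1 p2], Q as [q1 q2], Rp as [r1 r2].
    unfold closing_normal, closing_level, sqnorm, dot, Cconj, Cmult, Cminus, Cplus, Copp; simpl.
    ring. }
  pose proof (one_sub_sqnorm_pos Rp HR).
  assert (0 < 1 - dot Q P) by (apply one_sub_dot_pos; [assumption | apply Rlt_le, HP]).
  destruct (Req_dec (closing_level P Q Rp) 0) as [Hy | Hy]; [left | right; assumption].
  intros Hm. rewrite Hm, Hy in E. unfold dot at 1 in E; simpl in E. nra.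
Qed.

Lemma has_card_circumscribing P Q Rp : InD P -> InD Q -> InD Rp ->
  has_card (circumscribing_inscribed P Q Rp) (num_sq_roots (disc P Q Rp)).
Proof.
  intros HP HQ HR. rewrite <- closing_disc.
  apply (has_card_ext (fun T => exists A,
    (OnS1 A /\ dot (closing_normal P Q Rp) A = closing_level P Q Rp) /\ T = chord_triangle P Rp A)).
  { intros T. split.
    - intros (A & [HA Hl] & ->). apply circumscribing_chord_triangle; assumption.
    - apply circumscribing_inv; assumption. }
  apply has_card_image; [| apply has_card_circle_line, closing_line_nondegenerate; assumption].
  intros A1 A2 [HA1 Hl1] [HA2 Hl2]. apply (chord_triangle_inj P Q Rp); assumption.
Qed.

Definition klein_cosh (X Y : pt) : R :=
  (1 - dot X Y) / (sqrt (1 - sqnorm X) * sqrt (1 - sqnorm Y)).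

Lemma sqrt_one_sub_sqnorm_pos X : InD X -> 0 < sqrt (1 - sqnorm X).
Proof. intros HX. apply sqrt_lt_R0, one_sub_sqnorm_pos, HX. Qed.

Lemma sqrt_one_sub_sqnorm_sq X : InD X -> sqrt (1 - sqnorm X) ^ 2 = 1 - sqnorm X.
Proof. intros HX. apply pow2_sqrt, Rlt_le, one_sub_sqnorm_pos, HX. Qed.

Lemma Ginv_eq X : Ginv X =
  (fst X / (1 + sqrt (1 - sqnorm X)), snd X / (1 + sqrt (1 - sqnorm X))).
Proof.
  unfold Ginv, sqnorm; cbv zeta.
  replace (1 - fst X ^ 2 - snd X ^ 2) with (1 - (fst X ^ 2 + snd X ^ 2)) by ring. reflexivity.
Qed.

Lemma one_sub_sqnorm_Ginv X : InD X ->
  1 - sqnorm (Ginv X) = 2 * sqrt (1 - sqnorm X) / (1 + sqrt (1 - sqnorm X)).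
Proof.
  intros HX. pose proof (sqrt_one_sub_sqnorm_pos X HX) as Hs.
  pose proof (sqrt_one_sub_sqnorm_sq X HX) as Es.
  rewrite Ginv_eq. set (s := sqrt (1 - sqnorm X)) in *.
  destruct X as [x1 x2]; unfold sqnorm in *; simpl in *.
  field_simplify_eq; [| lra]. nra.
Qed.

Lemma sqdist_Ginv X Y : InD X -> InD Y ->
  sqdist (Ginv X) (Ginv Y) =
  2 * (1 - sqrt (1 - sqnorm X) * sqrt (1 - sqnorm Y) - dot X Y)
    / ((1 + sqrt (1 - sqnorm X)) * (1 + sqrt (1 - sqnorm Y))).
Proof.
  intros HX HY.
  pose proof (sqrt_one_sub_sqnorm_pos X HX) as Hs. pose proof (sqrt_one_sub_sqnorm_sq X HX) as Es.
  pose proof (sqrt_one_sub_sqnorm_pos Y HY) as Ht. pose proof (sqrt_one_sub_sqnorm_sq Y HY) as Et.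
  rewrite !Ginv_eq. set (s := sqrt (1 - sqnorm X)) in *. set (t := sqrt (1 - sqnorm Y)) in *.
  destruct X as [x1 x2], Y as [y1 y2]; unfold sqnorm, sqdist, dot in *; simpl in *.
  field_simplify_eq; [| lra].
  replace (x1 ^ 2) with (1 - s ^ 2 - x2 ^ 2) by lra.
  replace (y1 ^ 2) with (1 - t ^ 2 - y2 ^ 2) by lra. ring.
Qed.

Lemma d'_eq_arccosh X Y : InD X -> InD Y -> d' X Y = arccosh (klein_cosh X Y).
Proof.
  intros HX HY. unfold d', dP, klein_cosh. f_equal.
  rewrite sqdist_Ginv, !one_sub_sqnorm_Ginv by assumption.
  pose proof (sqrt_one_sub_sqnorm_pos X HX). pose proof (sqrt_one_sub_sqnorm_pos Y HY).
  field. lra.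
Qed.

(* [gap X Y / ((1 - |X|^2) (1 - |Y|^2))] is sinh^2 of the distance from X to Y. *)
Definition gap (X Y : pt) : R := (1 - dot X Y) ^ 2 - (1 - sqnorm X) * (1 - sqnorm Y).

Lemma gap_pos X Y : InD X -> InD Y -> X <> Y -> 0 < gap X Y.
Proof.
  intros HX HY Hne. pose proof (sqdist_pos Y X (not_eq_sym Hne)) as Hd.
  destruct X as [x1 x2], Y as [y1 y2]; unfold InD, gap, sqdist, sqnorm, dot in *.
  cbn [fst snd] in *.
  set (cross := x1 * y2 - x2 * y1).
  assert (E1 : (1 - (x1 * y1 + x2 * y2)) ^ 2 - (1 - (x1 ^ 2 + x2 ^ 2)) * (1 - (y1 ^ 2 + y2 ^ 2))
               = (y1 - x1) ^ 2 + (y2 - x2) ^ 2 - cross ^ 2) by (unfold cross; ring).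
  assert (E2 : cross ^ 2 + ((x1 - y1) * y1 + (x2 - y2) * y2) ^ 2
               = ((y1 - x1) ^ 2 + (y2 - x2) ^ 2) * (y1 ^ 2 + y2 ^ 2)) by (unfold cross; ring).
  pose proof (pow2_ge_0 ((x1 - y1) * y1 + (x2 - y2) * y2)).
  rewrite E1. nra.
Qed.

Lemma klein_cosh_pos X Y : InD X -> InD Y -> 0 < klein_cosh X Y.
Proof.
  intros HX HY. unfold klein_cosh. apply Rdiv_lt_0_compat.
  - apply one_sub_dot_pos; [assumption | apply Rlt_le, HY].
  - apply Rmult_lt_0_compat; apply sqrt_one_sub_sqnorm_pos; assumption.
Qed.

Lemma klein_cosh_sq X Y : InD X -> InD Y ->
  klein_cosh X Y ^ 2 = (1 - dot X Y) ^ 2 / ((1 - sqnorm X) * (1 - sqnorm Y)).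
Proof.
  intros HX HY.
  pose proof (sqrt_one_sub_sqnorm_pos X HX). pose proof (sqrt_one_sub_sqnorm_pos Y HY).
  rewrite <- (sqrt_one_sub_sqnorm_sq X HX), <- (sqrt_one_sub_sqnorm_sq Y HY).
  unfold klein_cosh. field. lra.
Qed.

Lemma klein_cosh_sq_sub_1 X Y : InD X -> InD Y ->
  klein_cosh X Y ^ 2 - 1 = gap X Y / ((1 - sqnorm X) * (1 - sqnorm Y)).
Proof.
  intros HX HY. rewrite klein_cosh_sq by assumption.
  pose proof (one_sub_sqnorm_pos X HX). pose proof (one_sub_sqnorm_pos Y HY).
  unfold gap. field. lra.
Qed.

Definition line_cosh2 (X Y Z : pt) : R := 1 + area2 X Y Z ^ 2 / ((1 - sqnorm Z) * gap X Y).

(* Up to a positive factor, [line_excess X Y Z t] is cosh^2 d'(Z, S) - [line_cosh2 X Y Z] for the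
   point S = [affine X Y t]; it is a quadratic polynomial in t with leading coefficient
   [line_excess_lead X Y Z] and vanishing discriminant. *)
Definition line_excess (X Y Z : pt) (t : R) : R :=
  (1 - dot Z (affine X Y t)) ^ 2 * gap X Y
  - (1 - sqnorm (affine X Y t)) * ((1 - sqnorm Z) * gap X Y + area2 X Y Z ^ 2).

Definition line_excess_lead (X Y Z : pt) : R :=
  gap X Y * dot Z (fst Y - fst X, snd Y - snd X) ^ 2
  + sqdist Y X * ((1 - sqnorm Z) * gap X Y + area2 X Y Z ^ 2).

Definition line_foot (X Y Z : pt) : R :=
  - (line_excess X Y Z 1 - line_excess_lead X Y Z - line_excess X Y Z 0)
  / (2 * line_excess_lead X Y Z).

Lemma line_excess_square X Y Z t :
  4 * line_excess_lead X Y Z * line_excess X Y Z t =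
  (2 * line_excess_lead X Y Z * t
   + (line_excess X Y Z 1 - line_excess_lead X Y Z - line_excess X Y Z 0)) ^ 2.
Proof.
  destruct X as [x1 x2], Y as [y1 y2], Z as [z1 z2].
  unfold line_excess_lead, line_excess, gap, area2, affine, sqdist, sqnorm, dot; cbn [fst snd].
  ring.
Qed.

Lemma arccosh_le x y : 1 <= x -> x <= y -> arccosh x <= arccosh y.
Proof.
  intros H1 H2. unfold arccosh. pose proof (sqrt_pos (x ^ 2 - 1)).
  destruct H2 as [H2 | ->]; [| lra].
  left. apply ln_increasing; [lra |].
  apply Rplus_lt_le_compat; [assumption |]. apply sqrt_le_1_alt. nra.
Qed.

Lemma neq_of_area2 X Y Z : area2 X Y Z <> 0 -> X <> Y.
Proof. intros HD <-. apply HD. unfold area2. ring. Qed.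

Section DistanceToLine.

Variables X Y Z : pt.
Hypotheses (HX : InD X) (HY : InD Y) (HZ : InD Z) (HD : area2 X Y Z <> 0).

Let HXY : X <> Y := neq_of_area2 X Y Z HD.

Let Hgap : 0 < gap X Y := gap_pos X Y HX HY HXY.
Let HZ1 : 0 < 1 - sqnorm Z := one_sub_sqnorm_pos Z HZ.

Lemma line_cosh2_ge_1 : 1 <= line_cosh2 X Y Z.
Proof.
  unfold line_cosh2. pose proof (pow2_ge_0 (area2 X Y Z)).
  assert (0 <= area2 X Y Z ^ 2 / ((1 - sqnorm Z) * gap X Y)).
  { apply Rmult_le_pos; [assumption |].
    apply Rlt_le, Rinv_0_lt_compat, Rmult_lt_0_compat; assumption. }
  lra.
Qed.

Lemma line_excess_lead_pos : 0 < line_excess_lead X Y Z.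
Proof.
  unfold line_excess_lead.
  pose proof (sqdist_pos Y X (not_eq_sym HXY)).
  pose proof (pow2_ge_0 (dot Z (fst Y - fst X, snd Y - snd X))).
  pose proof (pow2_ge_0 (area2 X Y Z)).
  assert (0 < (1 - sqnorm Z) * gap X Y) by (apply Rmult_lt_0_compat; assumption).
  nra.
Qed.

Lemma line_excess_nonneg t : 0 <= line_excess X Y Z t.
Proof.
  pose proof line_excess_lead_pos. pose proof (line_excess_square X Y Z t).
  pose proof (pow2_ge_0 (2 * line_excess_lead X Y Z * t
    + (line_excess X Y Z 1 - line_excess_lead X Y Z - line_excess X Y Z 0))).
  nra.
Qed.

Lemma line_excess_foot : line_excess X Y Z (line_foot X Y Z) = 0.
Proof.
  pose proof line_excess_lead_pos. pose proof (line_excess_square X Y Z (line_foot X Y Z)) as E.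
  replace (2 * line_excess_lead X Y Z * line_foot X Y Z
    + (line_excess X Y Z 1 - line_excess_lead X Y Z - line_excess X Y Z 0)) with 0 in E
    by (unfold line_foot; field; lra).
  nra.
Qed.

Lemma klein_cosh_sq_sub_line_cosh2 t : InD (affine X Y t) ->
  klein_cosh Z (affine X Y t) ^ 2 - line_cosh2 X Y Z =
  line_excess X Y Z t / ((1 - sqnorm Z) * (1 - sqnorm (affine X Y t)) * gap X Y).
Proof.
  intros HS. pose proof (one_sub_sqnorm_pos _ HS).
  rewrite klein_cosh_sq by assumption. unfold line_cosh2, line_excess.
  field. repeat split; lra.
Qed.

Lemma line_foot_in_disk : InD (affine X Y (line_foot X Y Z)).
Proof.
  pose proof line_excess_foot as E. unfold line_excess in E.
  set (S := affine X Y (line_foot X Y Z)) in *.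
  assert (HK : 0 < (1 - sqnorm Z) * gap X Y + area2 X Y Z ^ 2).
  { pose proof (pow2_ge_0 (area2 X Y Z)). pose proof (Rmult_lt_0_compat _ _ HZ1 Hgap). lra. }
  unfold InD. change (sqnorm S < 1).
  (* Otherwise both terms of the vanishing excess are zero, so |S| = 1, and then
     1 - <Z, S> > 0 keeps the first term positive. *)
  destruct (Rlt_le_dec (sqnorm S) 1) as [H | H]; [assumption | exfalso].
  pose proof (pow2_ge_0 (1 - dot Z S)).
  assert (HB : (1 - sqnorm S) * ((1 - sqnorm Z) * gap X Y + area2 X Y Z ^ 2) = 0) by nra.
  apply Rmult_integral in HB. destruct HB as [HB | HB]; [| lra].
  assert (0 < 1 - dot Z S) by (apply one_sub_dot_pos; [assumption | lra]).
  rewrite HB, Rmult_0_l, Rminus_0_r in E.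
  apply Rmult_integral in E. destruct E as [E | E]; [| lra].
  assert (0 < (1 - dot Z S) ^ 2) by (apply pow_lt; assumption). lra.
Qed.

Lemma is_delta_line : is_delta X Y Z (arccosh (sqrt (line_cosh2 X Y Z))).
Proof.
  pose proof line_cosh2_ge_1 as H1.
  assert (Hs1 : 1 <= sqrt (line_cosh2 X Y Z))
    by (rewrite <- sqrt_1; apply sqrt_le_1_alt; assumption).
  split.
  - pose proof line_foot_in_disk as HS.
    exists (affine X Y (line_foot X Y Z)).
    split; [assumption | split; [exists (line_foot X Y Z); reflexivity |]].
    rewrite d'_eq_arccosh by assumption. f_equal.
    pose proof (klein_cosh_sq_sub_line_cosh2 _ HS) as E.
    rewrite line_excess_foot, Rdiv_0_l in E.
    rewrite <- (sqrt_pow2 (klein_cosh Z _)) by (apply Rlt_le, klein_cosh_pos; assumption).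
    f_equal. lra.
  - intros S HS [t Ht]. change (S = affine X Y t) in Ht. subst S.
    rewrite d'_eq_arccosh by assumption.
    apply arccosh_le; [assumption |].
    rewrite <- (sqrt_pow2 (klein_cosh Z _)) by (apply Rlt_le, klein_cosh_pos; assumption).
    apply sqrt_le_1_alt.
    pose proof (klein_cosh_sq_sub_line_cosh2 t HS) as E.
    pose proof (one_sub_sqnorm_pos _ HS).
    assert (0 <= line_excess X Y Z t / ((1 - sqnorm Z) * (1 - sqnorm (affine X Y t)) * gap X Y)).
    { apply Rmult_le_pos; [apply line_excess_nonneg |].
      apply Rlt_le, Rinv_0_lt_compat. repeat apply Rmult_lt_0_compat; assumption. }
    lra.
Qed.

End DistanceToLine.

Lemma delta_of_is_delta P Q Rp m : is_delta P Q Rp m -> delta P Q Rp = m.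
Proof.
  intros Hm.
  assert (He : is_delta P Q Rp (delta P Q Rp))
    by (unfold delta; apply epsilon_spec; exists m; exact Hm).
  destruct Hm as [(S1 & HS1 & L1 & <-) Hle1], He as [(S2 & HS2 & L2 & <-) Hle2].
  apply Rle_antisym; [apply Hle2 | apply Hle1]; assumption.
Qed.

Lemma arccosh_sqrt c : 1 <= c -> arccosh (sqrt c) = arcsinh (sqrt (c - 1)).
Proof.
  intros Hc. unfold arccosh, arcsinh.
  rewrite !pow2_sqrt by lra. replace (c - 1 + 1) with c by ring. f_equal. ring.
Qed.

Lemma sinh_arccosh x : 1 <= x -> sinh (arccosh x) = sqrt (x ^ 2 - 1).
Proof.
  intros Hx. assert (Hr : 0 <= x ^ 2 - 1) by nra.
  pose proof (sqrt_pos (x ^ 2 - 1)). pose proof (pow2_sqrt _ Hr) as Er.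
  unfold sinh, arccosh. rewrite exp_Ropp, exp_ln by lra.
  set (r := sqrt (x ^ 2 - 1)) in *. field_simplify_eq; [| lra]. nra.
Qed.

Lemma ln_coth_half d : 0 < d -> ln ((exp d + 1) / (exp d - 1)) = arcsinh (1 / sinh d).
Proof.
  intros Hd.
  assert (He : 1 < exp d) by (rewrite <- exp_0; apply exp_increasing; assumption).
  unfold arcsinh, sinh. rewrite exp_Ropp. f_equal.
  set (e := exp d) in *.
  assert (Hinv : 0 < / e < 1) by (split; [apply Rinv_0_lt_compat | rewrite <- Rinv_1;
    apply Rinv_lt_contravar]; lra).
  assert (E : (1 / ((e - / e) / 2)) ^ 2 + 1 = ((e + / e) / (e - / e)) ^ 2).
  { field. split; nra. }
  rewrite E, sqrt_pow2.
  - field. split; nra.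
  - apply Rlt_le, Rdiv_lt_0_compat; lra.
Qed.

Lemma Delta'_eq_arcsinh X Y : InD X -> InD Y -> X <> Y ->
  Delta' X Y = arcsinh (sqrt ((1 - sqnorm X) * (1 - sqnorm Y) / gap X Y)).
Proof.
  intros HX HY Hne. unfold Delta'. rewrite d'_eq_arccosh by assumption.
  pose proof (gap_pos X Y HX HY Hne) as Hg.
  pose proof (one_sub_sqnorm_pos X HX). pose proof (one_sub_sqnorm_pos Y HY).
  pose proof (klein_cosh_sq_sub_1 X Y HX HY) as E.
  pose proof (klein_cosh_pos X Y HX HY) as HK.
  set (K := klein_cosh X Y) in *.
  assert (HK2 : 0 < K ^ 2 - 1).
  { rewrite E. apply Rdiv_lt_0_compat; [| apply Rmult_lt_0_compat]; assumption. }
  assert (HK1 : 1 < K) by nra.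
  assert (Hd : 0 < arccosh K).
  { unfold arccosh. rewrite <- ln_1. pose proof (sqrt_pos (K ^ 2 - 1)).
    apply ln_increasing; lra. }
  rewrite ln_coth_half, sinh_arccosh by lra. f_equal.
  rewrite E. unfold Rdiv at 1. rewrite Rmult_1_l, <- sqrt_inv. f_equal. field. lra.
Qed.

Lemma delta_eq_arcsinh X Y Z : InD X -> InD Y -> InD Z -> area2 X Y Z <> 0 ->
  delta X Y Z = arcsinh (sqrt (area2 X Y Z ^ 2 / ((1 - sqnorm Z) * gap X Y))).
Proof.
  intros HX HY HZ HD.
  rewrite (delta_of_is_delta _ _ _ _ (is_delta_line X Y Z HX HY HZ HD)).
  rewrite arccosh_sqrt by (apply line_cosh2_ge_1; assumption).
  unfold line_cosh2. do 2 f_equal. ring.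
Qed.

Lemma delta_Delta'_cmp X Y Z : InD X -> InD Y -> InD Z -> area2 X Y Z <> 0 ->
  (disc X Y Z < 0 -> delta X Y Z < Delta' X Y) /\
  (disc X Y Z = 0 -> delta X Y Z = Delta' X Y) /\
  (0 < disc X Y Z -> Delta' X Y < delta X Y Z).
Proof.
  intros HX HY HZ HD. pose proof (neq_of_area2 X Y Z HD) as Hne.
  rewrite delta_eq_arcsinh, Delta'_eq_arcsinh by assumption.
  pose proof (gap_pos X Y HX HY Hne) as Hg.
  pose proof (one_sub_sqnorm_pos X HX). pose proof (one_sub_sqnorm_pos Y HY).
  pose proof (one_sub_sqnorm_pos Z HZ).
  pose proof (pow2_ge_0 (area2 X Y Z)).
  set (a := area2 X Y Z ^ 2 / ((1 - sqnorm Z) * gap X Y)).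
  set (b := (1 - sqnorm X) * (1 - sqnorm Y) / gap X Y).
  set (w := / ((1 - sqnorm Z) * gap X Y)).
  assert (Hw : 0 < w) by (apply Rinv_0_lt_compat, Rmult_lt_0_compat; assumption).
  assert (Ha : 0 <= a) by (unfold a, Rdiv; fold w; nra).
  assert (Hb : 0 <= b).
  { apply Rlt_le, Rdiv_lt_0_compat; [apply Rmult_lt_0_compat |]; assumption. }
  assert (Eab : a - b = disc X Y Z * w) by (unfold a, b, w, disc; field; lra).
  split; [| split]; intros Hdisc.
  - apply arcsinh_lt, sqrt_lt_1_alt. nra.
  - do 2 f_equal. rewrite Hdisc, Rmult_0_l in Eab. lra.
  - apply arcsinh_lt, sqrt_lt_1_alt. nra.
Qed.

Lemma Delta'_pos X Y : InD X -> InD Y -> X <> Y -> 0 < Delta' X Y.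
Proof.
  intros HX HY Hne. rewrite Delta'_eq_arcsinh, <- arcsinh_0 by assumption.
  apply arcsinh_lt. apply sqrt_lt_R0, Rdiv_lt_0_compat; [apply Rmult_lt_0_compat |].
  - apply one_sub_sqnorm_pos, HX.
  - apply one_sub_sqnorm_pos, HY.
  - apply gap_pos; assumption.
Qed.

Lemma area2_cycle P Q Rp : area2 Rp P Q = area2 P Q Rp.
Proof. unfold area2. ring. Qed.

Lemma disc_cycle P Q Rp : disc Rp P Q = disc P Q Rp.
Proof. unfold disc. rewrite area2_cycle. ring. Qed.

Lemma omega_cmp P Q Rp : InD P -> InD Q -> InD Rp -> area2 P Q Rp <> 0 ->
  (disc P Q Rp < 0 -> omega P Q Rp < 1) /\
  (disc P Q Rp = 0 -> omega P Q Rp = 1) /\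
  (0 < disc P Q Rp -> 1 < omega P Q Rp).
Proof.
  intros HP HQ HR HD.
  assert (HD1 : area2 Rp P Q <> 0) by (rewrite area2_cycle; assumption).
  assert (HD2 : area2 Q Rp P <> 0) by (rewrite area2_cycle, area2_cycle; assumption).
  destruct (delta_Delta'_cmp P Q Rp HP HQ HR HD) as (A1 & A2 & A3).
  destruct (delta_Delta'_cmp Rp P Q HR HP HQ HD1) as (B1 & B2 & B3).
  destruct (delta_Delta'_cmp Q Rp P HQ HR HP HD2) as (C1 & C2 & C3).
  rewrite disc_cycle in B1, B2, B3. rewrite disc_cycle, disc_cycle in C1, C2, C3.
  pose proof (Delta'_pos P Q HP HQ (neq_of_area2 _ _ _ HD)).
  pose proof (Delta'_pos Rp P HR HP (neq_of_area2 _ _ _ HD1)).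
  pose proof (Delta'_pos Q Rp HQ HR (neq_of_area2 _ _ _ HD2)).
  set (num := delta P Q Rp + delta Rp P Q + delta Q Rp P).
  set (den := Delta' P Q + Delta' Rp P + Delta' Q Rp).
  assert (Hden : 0 < den) by (unfold den; lra).
  pose proof (Rinv_0_lt_compat den Hden) as Hw.
  assert (Eo : omega P Q Rp - 1 = (num - den) * / den).
  { unfold omega. fold num den. field. lra. }
  split; [| split]; intros Hdisc.
  - specialize (A1 Hdisc); specialize (B1 Hdisc); specialize (C1 Hdisc).
    assert (num < den) by (unfold num, den; lra). nra.
  - specialize (A2 Hdisc); specialize (B2 Hdisc); specialize (C2 Hdisc).
    assert (num = den) by (unfold num, den; lra). nra.
  - specialize (A3 Hdisc); specialize (B3 Hdisc); specialize (C3 Hdisc).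
    assert (den < num) by (unfold num, den; lra). nra.
Qed.

Lemma num_sq_roots_sign_transfer w k : (k < 0 -> w < 1) -> (k = 0 -> w = 1) -> (0 < k -> 1 < w) ->
  (if Rlt_dec w 1 then 0%nat else if Req_EM_T w 1 then 1%nat else 2%nat) = num_sq_roots k.
Proof.
  intros Hlt Heq Hgt. unfold num_sq_roots.
  destruct (Rtotal_order k 0) as [Hk | [Hk | Hk]];
    [specialize (Hlt Hk) | specialize (Heq Hk) | specialize (Hgt Hk)];
    destruct (Rlt_dec w 1), (Rlt_dec k 0); try lra;
    destruct (Req_EM_T w 1), (Req_EM_T k 0); lra || reflexivity.
Qed.

Theorem proposition3p2 (P Q Rp : pt) :
  InD P -> InD Q -> InD Rp -> ~ collinear P Q Rp ->
  has_card (circumscribing_inscribed P Q Rp)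
    (if Rlt_dec (omega P Q Rp) 1 then 0%nat
     else if Req_EM_T (omega P Q Rp) 1 then 1%nat else 2%nat).
Proof.
  intros HP HQ HR HC.
  destruct (omega_cmp P Q Rp HP HQ HR HC) as (Hlt & Heq & Hgt).
  rewrite (num_sq_roots_sign_transfer _ _ Hlt Heq Hgt).
  apply has_card_circumscribing; assumption.
Qed.
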